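(* Let $R$, $G$, $*$, $\sigma$ and $\mathcal{S}$ be as in the context, and suppose $\mathcal{S}$ is anticommutative. Let $x,y\in G\setminus G_*$ with $\sigma(y)\neq -1$. Then at least one of the following holds: - $x^y\in\{x,x^*\}$; - $\sigma(xy)=-1$, $xy=x^*y^*$ and $xy^*=x^*y$.
   Context: Throughout, $R$ is a commutative ring with unity with $\operatorname{char}(R)\neq 2$, and $\mathcal{U}(R)$ is its unit group. $G$ is a group with an involution $*$, i.e. a map $x\mapsto x^*$ with $(xy)^*=y^*x^*$ and $(x^* )^*=x$. The map $\sigma:G\to\mathcal{U}(R)$ is a nontrivial group homomorphism with kernel $N=\ker\sigma$, and it is compatible with $*$: $xx^*\in N$ for all $x\in G$. The group ring $RG$ carries the involution $\left(\sum_{x\in G}\alpha_x x\right)^{\sigma*}=\sum_{x\in G}\sigma(x)\alpha_x x^*$. Write $G_*=\{x\in G: x^*=x\}$ and $N_*=G_*\cap N$. Let $\mathcal{S}$ be the $R$-submodule of $RG$ spanned by the union of the following three sets: - $2\mathcal{S}_1=\{2x: x\in N_*\}$; - $\mathcal{S}_2=\{\alpha x: x\in G_*\setminus N,\ \alpha\in R,\ \alpha(1-\sigma(x))=0\}$; - $\mathcal{S}_3=\{x+\sigma(x)x^*: x\in G\setminus G_*\}$. $\mathcal{S}$ is called anticommutative if $ab+ba=0$ for all $a,b\in\mathcal{S}$. The conjugate of $x$ by $y$ is $x^y=y^{-1}xy$. *)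

(* Group rings RG for an arbitrary (possibly infinite) group G
   are represented by formal finite sums: lists of (coefficient, group element)
   pairs, compared through their coefficient functions. *)
From HB Require Import structures.
From mathcomp Require Import all_boot all_order all_algebra.
Set Implicit Arguments. Unset Strict Implicit. Unset Printing Implicit Defensive.
Import GRing.Theory.
Local Open Scope ring_scope.

Section GroupRing.
Variables (R : comNzRingType) (G : groupType).

Definition rg := seq (R * G).

Definition rg_coeff (a : rg) (g : G) : R := \sum_(p <- a | p.2 == g) p.1.

Definition rg_zero (a : rg) : Prop := forall g, rg_coeff a g = 0.

Definition rg_eq (a b : rg) : Prop := forall g, rg_coeff a g = rg_coeff b g.

Definition rg_add (a b : rg) : rg := a ++ b.
Definition rg_scale (r : R) (a : rg) : rg := [seq (r * p.1, p.2) | p <- a].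
Definition rg_mul (a b : rg) : rg :=
  [seq (p.1 * q.1, (p.2 * q.2)%g) | p <- a, q <- b].

Variables (star : G -> G) (sigma : G -> R).

Definition S_gen (v : rg) : Prop :=
  (exists x : G, star x = x /\ sigma x = 1 /\ v = [:: (2%:R, x)])
  \/ (exists (x : G) (alpha : R), star x = x /\ sigma x != 1 /\
        alpha * (1 - sigma x) = 0 /\ v = [:: (alpha, x)])
  \/ (exists x : G, star x != x /\ v = [:: (1, x); (sigma x, star x)]).

Definition in_S (a : rg) : Prop :=
  exists l : seq (R * rg), (forall c, c \in l -> S_gen c.2) /\
    rg_eq a (flatten [seq rg_scale c.1 c.2 | c <- l]).

Definition S_anticommutative : Prop :=
  forall a b, in_S a -> in_S b -> rg_zero (rg_add (rg_mul a b) (rg_mul b a)).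

End GroupRing.

(* Write a_z := z + sigma(z) z^* for the generators of S_3.  The coefficient
   of z z^* in a_z a_z + a_z a_z = 0 gives 4 = 0; hence 2g lies in S for every
   symmetric g with sigma(g) = -1, and the coefficient of z g in
   2g a_z + a_z 2g = 0 shows that g commutes with z up to replacing z by z^*.
   If x^y is neither x nor x^*, the coefficients of x y and x y^* in
   a_x a_y + a_y a_x = 0 are sums of powers of sigma(x), sigma(y) over the
   coincidences among the eight products; every coincidence pattern except the
   claimed one is ruled out, either by a ring identity contradicting 2 != 0 or
   sigma(y) != -1, or because it makes x y or x y^* a symmetric element of sign
   -1 that fails to commute with x in the above sense. *)
From HB Require Import structures.
From mathcomp Require Import all_boot all_order all_algebra.
From mathcomp Require Import ring.
Set Implicit Arguments. Unset Strict Implicit. Unset Printing Implicit Defensive.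
Import GRing.Theory.
Local Open Scope ring_scope.

Section Coefficients.
Variables (R : comNzRingType) (G : groupType).

Lemma rg_coeff_nil g : rg_coeff ([::] : rg R G) g = 0.
Proof. by rewrite /rg_coeff big_nil. Qed.

Lemma rg_coeff_cons r h (a : rg R G) g :
  rg_coeff ((r, h) :: a) g = (g == h)%:R * r + rg_coeff a g.
Proof.
by rewrite /rg_coeff big_cons /= eq_sym; case: (g == h); rewrite ?mul1r ?mul0r ?add0r.
Qed.

Lemma rg_coeff_cat (a b : rg R G) g : rg_coeff (a ++ b) g = rg_coeff a g + rg_coeff b g.
Proof. by rewrite /rg_coeff big_cat. Qed.

End Coefficients.

Lemma two_eq0_of_sqr1 (R : comNzRingType) (s t : R) :
  s ^+ 2 = 1 -> t ^+ 2 = 1 -> 1 + s * t + t = 0 -> 4%:R = 0 :> R -> 2%:R = 0 :> R.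
Proof.
(* p is s + 1 + t, written as a combination of the hypotheses *)
move=> s2 t2 h four0; pose p := t * (1 + s * t + t) - (s + 1) * (t ^+ 2 - 1).
have -> : 2%:R = 2%:R * (s ^+ 2 - 1 - (t ^+ 2 - 1) - p ^+ 2 + 2%:R * p * (1 + t))
                 - 4%:R * t :> R by rewrite /p; ring.
by rewrite /p s2 t2 h four0; ring.
Qed.

Section Anticommutative.
Variables (R : comNzRingType) (G : groupType).
Variables (star : G -> G) (sigma : G -> R).
Hypotheses (two_neq0 : (2%:R : R) != 0)
  (starM : forall x y : G, star (x * y)%g = (star y * star x)%g)
  (starK : forall x : G, star (star x) = x)
  (sigmaM : forall x y : G, sigma (x * y)%g = sigma x * sigma y)
  (sigma_mul_star : forall x : G, sigma (x * star x)%g = 1)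
  (anti_S : S_anticommutative star sigma).

Lemma mulIsigma z a b : a * sigma z = b * sigma z -> a = b.
Proof.
by move=> h; rewrite -[a]mulr1 -[b]mulr1 -(sigma_mul_star z) sigmaM !mulrA h.
Qed.

Definition S3_elem (z : G) : rg R G := [:: (1, z); (sigma z, star z)].

Lemma S3_elem_in_S z : star z != z -> in_S star sigma (S3_elem z).
Proof.
move=> hz; exists [:: (1, S3_elem z)]; split.
  by move=> c; rewrite inE => /eqP ->; right; right; exists z.
by move=> g; rewrite /= /rg_scale /= !rg_coeff_cons rg_coeff_nil !mul1r.
Qed.

Lemma anticomm_coeff u v : in_S star sigma u -> in_S star sigma v ->
  forall g, rg_coeff (rg_mul u v) g + rg_coeff (rg_mul v u) g = 0.
Proof. by move=> hu hv g; rewrite -rg_coeff_cat; apply: anti_S. Qed.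

Lemma S3_elem_anticomm x y : star x != x -> star y != y -> forall w,
  (w == x * y)%g%:R + sigma y * (w == x * star y)%g%:R
  + sigma x * (w == star x * y)%g%:R
  + sigma x * sigma y * (w == star x * star y)%g%:R
  + (w == y * x)%g%:R + sigma x * (w == y * star x)%g%:R
  + sigma y * (w == star y * x)%g%:R
  + sigma y * sigma x * (w == star y * star x)%g%:R = 0.
Proof.
move=> hx hy w; rewrite -(anticomm_coeff (S3_elem_in_S hx) (S3_elem_in_S hy) w).
rewrite /rg_mul /= !rg_coeff_cons !rg_coeff_nil; ring.
Qed.

Lemma four_eq0 z : star z != z -> 4%:R = 0 :> R.
Proof.
move=> hz; have := S3_elem_anticomm hz hz (z * star z)%g.
rewrite eqxx !(inj_eq (mulgI _)) !(inj_eq (mulIg _)) [z == star z]eq_sym (negbTE hz).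
case: eqP => _ /= h.
  by apply: (mulIsigma (z := z)); rewrite mul0r -h; ring.
suff two0 : 2%:R = 0 :> R by move: two_neq0; rewrite two0 eqxx.
by apply: (mulIsigma (z := z)); rewrite mul0r -h; ring.
Qed.

(* 2g lies in S_2, since 2 (1 - sigma g) = 4 = 0. *)
Lemma double_sym_in_S g : star g = g -> sigma g = -1 -> 4%:R = 0 :> R ->
  in_S star sigma [:: (2%:R, g)].
Proof.
move=> hg hsg four0; exists [:: (1, [:: (2%:R, g)])]; split; last first.
  by move=> h; rewrite /= /rg_scale /= !rg_coeff_cons rg_coeff_nil !mul1r.
move=> c; rewrite inE => /eqP ->; right; left; exists g, 2%:R.
do !split=> //; rewrite hsg; last by rewrite -four0; ring.
by apply: contra two_neq0 => /eqP h; rewrite mulr2n -{1}h addNr.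
Qed.

Lemma sym_commute_or_twist g z : star g = g -> sigma g = -1 -> star z != z ->
  (g * z = z * g)%g \/ (g * star z = z * g)%g.
Proof.
move=> hg hsg hz.
have := anticomm_coeff (double_sym_in_S hg hsg (four_eq0 hz)) (S3_elem_in_S hz) (z * g)%g.
rewrite /rg_mul /= !rg_coeff_cons !rg_coeff_nil !(inj_eq (mulIg _)) eqxx.
rewrite [z == star z]eq_sym (negbTE hz).
case: eqP => [-> _|_]; first by left.
case: eqP => [-> _|_ /= h]; first by right.
by exfalso; move/eqP: two_neq0; apply; rewrite -h; ring.
Qed.

Lemma sym_mul_commute_or_twist x z : star x != x ->
  star (x * z)%g = (x * z)%g -> sigma (x * z)%g = -1 ->
  (z * x = x * z)%g \/ (z * star x = x * z)%g.
Proof.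
move=> hx hsym hsig.
by case: (sym_commute_or_twist hsym hsig hx) => e; [left | right];
  apply: (mulgI x); rewrite mulgA e.
Qed.

Section NonCommuting.
Variables x y : G.
Hypotheses (hx : star x != x) (hy : star y != y)
  (hxy : (x * y)%g != (y * x)%g) (hxy' : (x * y)%g != (y * star x)%g).

Lemma anticomm_at_mul :
  1 + sigma x * sigma y * (x * y == star x * star y)%g%:R
  + sigma y * (x * y == star y * x)%g%:R
  + sigma y * sigma x * (x * y == star y * star x)%g%:R = 0.
Proof.
have := S3_elem_anticomm hx hy (x * y)%g.
rewrite eqxx !(inj_eq (mulgI _)) !(inj_eq (mulIg _)) [y == _]eq_sym [x == _]eq_sym.
rewrite (negbTE hx) (negbTE hy) (negbTE hxy) (negbTE hxy') => h.
by rewrite -h /=; ring.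
Qed.

Lemma star_mul_neq : star (x * y)%g != (x * y)%g.
Proof.
apply/negP => /eqP hsym.
have hyx : (x * y == star y * x)%g = false.
  apply/negbTE; apply: contra hx => /eqP e; apply/eqP; apply: (mulgI (star y)).
  by rewrite -e -starM hsym.
have hstar : (x * y == star x * star y)%g = false.
  by apply/negbTE; apply: contra hxy => /eqP e; rewrite -{1}hsym e starM !starK.
have hxyS : (x * y == star y * star x)%g by rewrite -starM hsym.
have := anticomm_at_mul; rewrite hxyS hyx hstar /= => h.
have hsig : sigma (x * y)%g = -1 by rewrite sigmaM -[RHS]addr0 -h; ring.
case: (sym_mul_commute_or_twist hx hsym hsig) => e.
  by move: hxy; rewrite e eqxx.
by move: hxy'; rewrite e eqxx.
Qed.

Lemma mul_star_mul_eqF : (x * y == star y * star x)%g = false.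
Proof. by rewrite -starM eq_sym (negbTE star_mul_neq). Qed.

Hypothesis hsy : sigma y != -1.

Lemma mul_eq_star_mul : (x * y = star x * star y)%g.
Proof.
apply/eqP; apply: contraNT hsy => hne.
have := anticomm_at_mul; rewrite mul_star_mul_eqF (negbTE hne) /=.
case: eqP => _ /= h; first by apply/eqP; rewrite -[RHS]addr0 -h; ring.
have : (1 : R) = 0 by rewrite -h; ring.
by move/eqP; rewrite oner_eq0.
Qed.

Lemma sigma_mul_eqN1 : sigma (x * y)%g = -1.
Proof.
have := anticomm_at_mul; rewrite mul_star_mul_eqF -mul_eq_star_mul eqxx /=.
case: eqP => [e|_] /= h; last by rewrite sigmaM -[RHS]addr0 -h; ring.
have sy : sigma (star y) = sigma y.
  by apply: (mulIsigma (z := x)); rewrite -sigmaM -e sigmaM mulrC.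
have sx : sigma (star x) = sigma x.
  by apply: (mulIsigma (z := y)); rewrite -{1}sy -!sigmaM -mul_eq_star_mul.
have sqr1 z : sigma (star z) = sigma z -> sigma z ^+ 2 = 1.
  by move=> sz; rewrite expr2 -{2}sz -sigmaM sigma_mul_star.
have {}h : 1 + sigma x * sigma y + sigma y = 0 by rewrite -h; ring.
exfalso; move/eqP: two_neq0; apply.
exact: two_eq0_of_sqr1 (sqr1 _ sx) (sqr1 _ sy) h (four_eq0 hx).
Qed.

Lemma anticomm_at_mul_star :
  sigma y + sigma x * (x * star y == star x * y)%g%:R
  + (x * star y == y * x)%g%:R + sigma x * (x * star y == y * star x)%g%:R
  + sigma y * (x * star y == star y * x)%g%:R = 0.
Proof.
have hS : (x * star y == star y * star x)%g = false.
  by rewrite -(inj_eq (can_inj starK)) !starM !starK eq_sym (negbTE hxy').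
have := S3_elem_anticomm hx hy (x * star y)%g.
rewrite eqxx !(inj_eq (mulgI _)) !(inj_eq (mulIg _)) [x == star x]eq_sym.
rewrite (negbTE hx) (negbTE hy) hS => h.
by rewrite -h /=; ring.
Qed.

Lemma mul_star_eq_star_mul : (x * star y = star x * y)%g.
Proof.
have h1 : 1 + sigma x * sigma y = 0 by rewrite -sigmaM sigma_mul_eqN1 addrN.
case: (eqVneq (x * star y)%g (star x * y)%g) => // hne; exfalso.
have := anticomm_at_mul_star; rewrite (negbTE hne) /=.
case b1 : (x * star y == y * x)%g.
  move/eqP: b1 => ->; rewrite (inj_eq (mulgI _)) (inj_eq (mulIg _)).
  rewrite [x == star x]eq_sym [y == star y]eq_sym (negbTE hx) (negbTE hy) /= => h.
  by move/eqP: hsy; apply; rewrite -[RHS]addr0 -h; ring.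
case b2 : (x * star y == y * star x)%g; last first.
  case: eqP => _ /= h.
    by move/eqP: two_neq0; apply; apply: (mulIsigma (z := y)); rewrite mul0r -h; ring.
  by move/eqP: (oner_neq0 R); apply; apply: (mulIsigma (z := y)); rewrite mul0r -h; ring.
case b3 : (x * star y == star y * x)%g => /= h.
  have {}h : 2%:R * sigma y + sigma x = 0 by rewrite -h; ring.
  move/eqP: two_neq0; apply.
  have -> : 2%:R = 2%:R * (1 + sigma x * sigma y)
    - 2%:R * sigma y * (2%:R * sigma y + sigma x) + sigma y ^+ 2 * 4%:R :> R by ring.
  by rewrite h1 h (four_eq0 hx); ring.
have hsym : star (x * star y)%g = (x * star y)%g by rewrite starM starK (eqP b2).
have hsig : sigma (x * star y)%g = -1.
  have hs : sigma x = - sigma y.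
    by apply/eqP; rewrite -addr_eq0; apply/eqP; rewrite -h; ring.
  by rewrite sigmaM hs mulNr -sigmaM sigma_mul_star.
case: (sym_mul_commute_or_twist hx hsym hsig) => e.
  by move: b3; rewrite e eqxx.
by move/(congr1 star): e; rewrite !starM !starK => e; move: hxy'; rewrite e eqxx.
Qed.

End NonCommuting.

End Anticommutative.

Theorem lemma3p5 (R : comNzRingType) (G : groupType)
  (star : G -> G) (sigma : G -> R)
  (hchar : (2%:R : R) != 0)
  (hstarM : forall x y : G, star (x * y)%g = (star y * star x)%g)
  (hstarK : forall x : G, star (star x) = x)
  (hsigmaM : forall x y : G, sigma (x * y)%g = sigma x * sigma y)
  (hsigmaU : forall x : G, exists u : R, sigma x * u = 1)
  (hsigma_nontriv : exists x : G, sigma x != 1)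
  (hcompat : forall x : G, sigma (x * star x)%g = 1)
  (hanti : S_anticommutative star sigma)
  (x y : G) (hx : star x != x) (hy : star y != y)
  (hsy : sigma y != -1) :
  ((x ^ y)%g = x \/ (x ^ y)%g = star x) \/
  (sigma (x * y)%g = -1 /\ (x * y)%g = (star x * star y)%g /\
   (x * star y)%g = (star x * y)%g).
Proof.
case: (eqVneq (x * y)%g (y * x)%g) => [e|hxy].
  by left; left; apply: (mulgI y); rewrite -conjgC; exact: e.
case: (eqVneq (x * y)%g (y * star x)%g) => [e|hxy'].
  by left; right; apply: (mulgI y); rewrite -conjgC; exact: e.
right; split; [|split].
- exact (sigma_mul_eqN1 hchar hstarM hstarK hsigmaM hcompat hanti hx hy hxy hxy' hsy).
- exact (mul_eq_star_mul hchar hstarM hstarK hsigmaM hcompat hanti hx hy hxy hxy' hsy).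
- exact (mul_star_eq_star_mul hchar hstarM hstarK hsigmaM hcompat hanti
           hx hy hxy hxy' hsy).
Qed.
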